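(* Run Alg-ABRD, either with its deterministic player selection or with the randomized-selection variant, using the Shapley cost sharing mechanism, and suppose the dynamic does not converge at any step. Let $p^{t_{\max}}$ be the last generated profile and $p^{t^*}$ a generated profile of minimum total cost. Then $C(p^{t_{\max}})\le\lceil\max_j\alpha_j\rceil\cdot\mathcal{H}_N\cdot C(p^{t^*})$, where $\mathcal{H}_N=\sum_{k=1}^N1/k$.
   Context: GND instance: finite resource set $E$; requests (players) $i \in [N]$, each with a reply collection $P_i \subseteq 2^E$ and a weight vector $w_i \in \mathbb{Z}_{\geq 1}^E$; constants $q \in \mathbb{Z}_{\ge 1}$, $\alpha_1,\dots,\alpha_q > 1$; for each $e$, $\sigma_e \geq 0$ and $\xi_{e,j} \geq 0$ (at least one positive), and $F_e(0)=0$, $F_e(l)=\sigma_e+\sum_j \xi_{e,j} l^{\alpha_j}$ for $l>0$. Profile $p\in P=P_1\times\dots\times P_N$; load $l_e^p=\sum_{i: e\in p_i} w_i(e)$; total cost $C(p)=\sum_e F_e(l_e^p)$; $(p'_i,p_{-i})$ is $p$ with coordinate $i$ replaced by $p'_i$. A reply $\varrho$-oracle ($\varrho \ge 1$), given a reply collection $R$ and tolls $\tau:E\to\mathbb{R}_{>0}$, returns $r \in R$ with $\sum_{e\in r}\tau(e) \le \varrho \sum_{e \in r'}\tau(e)$ for all $r'\in R$. Shapley cost sharing: with $S_e=\{i:e\in p_i\}$, for $e\in p_i$, $f_{i,e}(p)=\mathbb{E}\big[F_e\big(\sum_{i'\in S_e^i(\pi_e)}w_{i'}(e)+w_i(e)\big)-F_e\big(\sum_{i'\in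 S_e^i(\pi_e)}w_{i'}(e)\big)\big]$, $\pi_e$ a uniformly random permutation of $S_e$ and $S_e^i(\pi_e)$ the players preceding $i$; $f_{i,e}(p)=0$ if $e\notin p_i$. Individual cost $C_i(p)=\sum_e f_{i,e}(p)$. Alg-ABRD: fix small $\epsilon>0$ and $\epsilon_1=\frac{1+\epsilon}{1-\epsilon}$. Values $\widetilde f_{i,e}(p)$ are fixed with $(1-\epsilon) f_{i,e}(p) \le \widetilde f_{i,e}(p) \le (1+\epsilon) f_{i,e}(p)$, and $\widetilde C_i(p)=\sum_e \widetilde f_{i,e}(p)$. Initial $p^0$: $p^0_i$ is the oracle's output on $P_i$ with tolls $\tau_i^0(e)=F_e(w_i(e))$. At step $t\ge1$: for every $i$ compute $p'_i$ with $\widetilde C_i(p'_i,p^{t-1}_{-i}) \le \varrho\, \widetilde C_i(p''_i,p^{t-1}_{-i})$ for all $p''_i\in P_i$, and $\delta_i^t=\widetilde C_i(p^{t-1}) - \epsilon_1 \widetilde C_i(p'_i,p^{t-1}_{-i})$. If $\delta_i^t\le 0$ for all $i$ the dynamic converges (sets $p^t=p^{t-1}$ and stops). Otherwise, deterministic selection: pick $j$ with $\delta_j^t>0$ and $\delta_j^t\ge\frac1N\sum_i\delta_i^t$ and set $p^t=(p'_j,p^{t-1}_{-j})$; randomized selection: draw $i\in[N]$ uniformly at random and set $p^t=(p'_i,p^{t-1}_{-i})$ if $\delta_i^t>0$, else $p^t=p^{t-1}$. The run lasts a fixed finite number of steps. *)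

From HB Require Import structures.
From mathcomp Require Import all_boot all_order all_algebra all_fingroup.
From mathcomp Require Import all_classical all_reals all_analysis.
Set Implicit Arguments. Unset Strict Implicit. Unset Printing Implicit Defensive.
Import Order.TTheory GRing.Theory Num.Theory.
Local Open Scope ring_scope.

Section GND.
Variables (R : realType) (E : finType) (N q : nat).

Definition profile := 'I_N -> {set E}.

Definition upd (p : profile) (i : 'I_N) (r : {set E}) : profile :=
  fun k => if k == i then r else p k.

Definition Fcost (alpha : 'I_q -> R) (sigma : E -> R) (xi : E -> 'I_q -> R)
    (e : E) (l : nat) : R :=
  if l == 0%N then 0 else sigma e + \sum_(j < q) xi e j * powR (l%:R) (alpha j).

Definition load (w : 'I_N -> E -> nat) (p : profile) (e : E) : nat :=
  (\sum_(i < N | e \in p i) w i e)%N.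

Definition total_cost alpha sigma xi w (p : profile) : R :=
  \sum_(e : E) Fcost alpha sigma xi e (load w p e).

(* Shapley share f_{i,e}(p): expectation over a uniformly random ordering of
   the users S_e of e.  A uniformly random permutation pi of all players
   induces a uniformly random ordering of S_e; the players of S_e preceding i
   are those i' in S_e with pi i' < pi i. *)
Definition shapley_share alpha sigma xi (w : 'I_N -> E -> nat)
    (i : 'I_N) (e : E) (p : profile) : R :=
  if e \in p i then
    (N`!%:R)^-1 * \sum_(pi : {perm 'I_N})
      (let L := (\sum_(i' < N | (e \in p i') && (pi i' < pi i)%N) w i' e)%N in
       Fcost alpha sigma xi e (L + w i e) - Fcost alpha sigma xi e L)
  else 0.

Definition indiv_cost alpha sigma xi w (i : 'I_N) (p : profile) : R :=
  \sum_(e : E) shapley_share alpha sigma xi w i e p.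

Definition approx_cost (ftil : 'I_N -> E -> profile -> R) (i : 'I_N)
    (p : profile) : R := \sum_(e : E) ftil i e p.

Definition harmonic_number (n : nat) : R := \sum_(1 <= k < n.+1) (k%:R)^-1.

(* Alg-ABRD run of T steps with profiles p 0, ..., p T and, at each step
   t >= 1, the computed approximate best responses br t i. *)
Definition delta (eps : R) ftil (p : nat -> profile) (br : nat -> 'I_N -> {set E})
    (t : nat) (i : 'I_N) : R :=
  approx_cost ftil i (p t.-1)
  - ((1 + eps) / (1 - eps)) * approx_cost ftil i (upd (p t.-1) i (br t i)).

(* deterministic = true : deterministic selection; false : randomized
   selection (every realization of the random draws). *)
Definition is_ABRD_run (deterministic : bool) (rho eps : R) alpha sigma xi
    (w : 'I_N -> E -> nat) (P : 'I_N -> {set {set E}})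
    (ftil : 'I_N -> E -> profile -> R) (T : nat)
    (p : nat -> profile) (br : nat -> 'I_N -> {set E}) : Prop :=
  (* initial profile: oracle outputs for the tolls F_e(w_i(e)) *)
  (forall i, p 0%N i \in P i /\
     forall r', r' \in P i ->
       \sum_(e in p 0%N i) Fcost alpha sigma xi e (w i e)
       <= rho * \sum_(e in r') Fcost alpha sigma xi e (w i e)) /\
  (forall t, (1 <= t <= T)%N ->
     (forall i, br t i \in P i /\
        forall r'', r'' \in P i ->
          approx_cost ftil i (upd (p t.-1) i (br t i))
          <= rho * approx_cost ftil i (upd (p t.-1) i r'')) /\
     (if deterministic then
        exists j, 0 < delta eps ftil p br t j /\
          (N%:R)^-1 * \sum_(i < N) delta eps ftil p br t i
            <= delta eps ftil p br t j /\
          p t = upd (p t.-1) j (br t j)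
      else
        exists i, p t = if 0 < delta eps ftil p br t i
                        then upd (p t.-1) i (br t i) else p t.-1)).

End GND.

From HB Require Import structures.
From mathcomp Require Import reals exp.
From mathcomp Require Import all_boot all_order all_algebra all_fingroup.
From mathcomp Require Import ring lra.
Import Order.TTheory GRing.Theory Num.Theory.
Local Open Scope ring_scope.
Set Implicit Arguments. Unset Strict Implicit. Unset Printing Implicit Defensive.

(* Shapley cost sharing makes the game an exact potential game.  On a resource
   e, with cost game v_e(S) = F_e(sum_(k in S) w_k e), the Hart--Mas-Colell
   potential Phi_e(S) = sum_(U <= S) d_e(U) / |U|, where d_e is the Moebius
   transform (Harsanyi dividends) of v_e, satisfies
   Phi_e(S) - Phi_e(S \ i) = Shapley value of i in S.  Hence
   Phi(p) = sum_e Phi_e(S_e(p)) moves exactly like the cost of the deviating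
   player, and every step of Alg-ABRD lowers that true cost, the factor
   (1 + eps) / (1 - eps) absorbing the approximation error; so Phi never
   increases along the run.  The recursion |S| Phi_e(S) = v_e(S) + sum_j Phi_e(S \ j)
   compares Phi with the total cost: Phi_e(S) <= H_|S| v_e(S) since v_e is
   monotone, and v_e(S) <= M Phi_e(S) for M = ceil (max_j alpha_j) since, by
   Bernoulli's inequality, sum_j v_e(S \ j) >= (|S| - M) v_e(S).  Therefore
   C(p^T) <= M Phi(p^T) <= M Phi(p^t* ) <= M H_N C(p^t* ). *)

Section Moebius.
Variables (R : pzRingType) (N : nat).
Implicit Types (S T U : {set 'I_N}).

Lemma sum_toggle_eq0 (A : pred {set 'I_N}) (y : 'I_N) (f : {set 'I_N} -> R) :
    (forall U, y \notin U -> A (y |: U) = A U) ->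
    (forall U, y \notin U -> f (y |: U) = - f U) ->
  \sum_(U : {set 'I_N} | A U) f U = 0.
Proof.
move=> Ay fy; rewrite (bigID (fun U => y \in U)) /=.
rewrite (reindex_onto (fun U : {set 'I_N} => y |: U) (fun U => U :\ y)); last first.
  by move=> U /andP[_ yU]; rewrite setD1K.
rewrite [X in X + _](_ : _ = - \sum_(U : {set 'I_N} | A U && (y \notin U)) f U) ?addNr //.
rewrite -sumrN; apply: eq_big => U.
  rewrite setU11 andbT; case yU: (y \in U); last by rewrite Ay ?yU // setU1K ?yU // eqxx andbT.
  rewrite andbF; apply/negbTE/andP => -[_ /eqP eqU].
  by move: (setD11 y (y |: U)); rewrite eqU yU.
by case/andP=> _ /eqP <-; rewrite fy ?setD11 // setD1K ?setU11.
Qed.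

Lemma sum_sign_interval T S : T \subset S ->
  \sum_(U : {set 'I_N} | (T \subset U) && (U \subset S)) (-1) ^+ (#|U| + #|T|)
    = (T == S)%:R :> R.
Proof.
move=> TS; have [<-|TnS] := eqVneq T S.
  rewrite (big_pred1 T); first by rewrite -signr_odd addnn odd_double.
  by move=> U; rewrite /= eqEsubset andbC.
have [y yS yT] : exists2 y, y \in S & y \notin T.
  by apply/subsetPn; apply: contra TnS => ST; rewrite eqEsubset TS.
apply: (@sum_toggle_eq0 _ y) => U yU.
  have -> : (T \subset y |: U) = (T \subset U).
    by rewrite -{2}(setU1K yU) subsetD1 yT andbT.
  by rewrite subUset sub1set yS.
by rewrite cardsU1 yU exprS mulN1r.
Qed.

Variable v : {set 'I_N} -> R.

Definition moebius U :=
  \sum_(T : {set 'I_N} | T \subset U) (-1) ^+ (#|U| + #|T|) * v T.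

Lemma sum_moebius S : \sum_(U : {set 'I_N} | U \subset S) moebius U = v S.
Proof.
rewrite (exchange_big_dep (fun T => T \subset S)) => [|U T US TU]; last first.
  exact: subset_trans TU US.
transitivity (\sum_(T : {set 'I_N} | T \subset S) (T == S)%:R * v T).
  apply: eq_bigr => T TS; rewrite -big_distrl /=.
  by rewrite (eq_bigl _ _ (fun U => andbC _ _)) sum_sign_interval.
rewrite (bigD1 S) //= eqxx mul1r big1 ?addr0 // => T /andP[_ /negbTE ->].
by rewrite mul0r.
Qed.

Lemma sum_subsets_setD1 (g : {set 'I_N} -> R) S i :
  \sum_(U : {set 'I_N} | U \subset S) g U =
  \sum_(U : {set 'I_N} | U \subset S :\ i) g U
    + \sum_(U : {set 'I_N} | (U \subset S) && (i \in U)) g U.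
Proof.
by rewrite (bigID (fun U => i \in U)) addrC (eq_bigl _ _ (fun U => subsetD1 U S i)).
Qed.

Lemma moebius0 : moebius set0 = v set0.
Proof. by rewrite -[RHS]sum_moebius (big_pred1 set0) // => U; rewrite /= subset0. Qed.

End Moebius.

Section ShapleyValue.
Variables (R : numFieldType) (N : nat) (v : {set 'I_N} -> R).
Implicit Types (S U : {set 'I_N}) (pi : {perm 'I_N}).

Definition perm_last pi U i := [forall k in U, (k != i) ==> (pi k < pi i)%N].

Lemma perm_last_tperm pi U i k : i \in U -> k \in U ->
  perm_last (tperm i k * pi) U i = perm_last pi U k.
Proof.
move=> iU kU; have tpermU x : (tperm i k x \in U) = (x \in U).
  by case: tpermP => [->|->|]; rewrite ?iU ?kU.
have tperm_neq x y : (tperm i k x != y) = (x != tperm i k y).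
  by rewrite (can2_eq (tpermK i k) (tpermK i k)).
apply/forall_inP/forall_inP => last_i x xU.
  have := last_i (tperm i k x); rewrite tpermU => /(_ xU).
  by rewrite !permM tpermK tpermL tperm_neq tpermL.
have := last_i (tperm i k x); rewrite tpermU => /(_ xU).
by rewrite !permM tpermL tperm_neq tpermR.
Qed.

Lemma sum_perm_last pi U i : i \in U -> \sum_(k in U) ((perm_last pi U k)%:R : R) = 1.
Proof.
move=> iU; case: (@arg_maxnP _ i (mem U) (fun k => nat_of_ord (pi k)) iU) => k kU /= k_max.
have last_k : perm_last pi U k.
  apply/forall_inP => x xU; apply/implyP => xk; rewrite ltn_neqAle k_max // andbT.
  by apply: contra xk => /eqP/val_inj/perm_inj ->.
rewrite (bigD1 k) //= last_k big1 ?addr0 // => x /andP[xU xk].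
apply/eqP; rewrite pnatr_eq0 eqb0; apply: contraNN xk => /forall_inP/(_ k kU).
by rewrite eq_sym; case: eqP => //= _; rewrite ltnNge k_max.
Qed.

Lemma sum_perm_lastE U i : i \in U ->
  \sum_pi ((perm_last pi U i)%:R : R) = N`!%:R / #|U|%:R.
Proof.
move=> iU; apply: (canRL (mulfK _)).
  by rewrite pnatr_eq0 -lt0n card_gt0; apply/set0Pn; exists i.
have same k : k \in U ->
    \sum_pi ((perm_last pi U k)%:R : R) = \sum_pi (perm_last pi U i)%:R.
  move=> kU; rewrite [RHS](reindex_inj (mulgI (tperm i k))) /=.
  by apply: eq_bigr => pi _; rewrite perm_last_tperm.
transitivity (\sum_(k in U) \sum_pi ((perm_last pi U k)%:R : R)).
  by rewrite (eq_bigr _ same) sumr_const mulr_natr.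
rewrite exchange_big /= (eq_bigr (fun _ => 1)) => [|pi _]; last exact: sum_perm_last iU.
by rewrite sumr_const card_Sn.
Qed.

Definition predecessors pi S i := [set k in S | (pi k < pi i)%N].

Definition shapley S i := (N`!%:R)^-1 *
  \sum_pi (v (i |: predecessors pi S i) - v (predecessors pi S i)).

Lemma sub_predecessorsU1 pi S U i : i \in S -> i \in U ->
  (U \subset i |: predecessors pi S i) = (U \subset S) && perm_last pi U i.
Proof.
move=> iS iU; apply/subsetP/andP => [U_sub|[/subsetP US /forall_inP last_i] x xU].
  split.
    by apply/subsetP => x /U_sub; rewrite in_setU1 inE => /predU1P[->|/andP[]].
  apply/forall_inP => x xU; apply/implyP => xi.
  by have := U_sub x xU; rewrite in_setU1 inE (negbTE xi) => /andP[].
rewrite in_setU1 inE US //=; have [//|xi] := eqVneq x i.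
exact: implyP (last_i x xU) xi.
Qed.

Lemma marginal_moebius pi S i : i \in S ->
  v (i |: predecessors pi S i) - v (predecessors pi S i) =
  \sum_(U : {set 'I_N} | (U \subset S) && (i \in U)) moebius v U * (perm_last pi U i)%:R.
Proof.
move=> iS; have iP : i \notin predecessors pi S i by rewrite inE ltnn andbF.
rewrite -!sum_moebius (sum_subsets_setD1 _ (i |: _) i) setU1K // addrC addKr.
rewrite big_mkcond [RHS]big_mkcond; apply: eq_bigr => U _.
have [iU|] := boolP (i \in U); last by rewrite !andbF.
rewrite !andbT sub_predecessorsU1 //.
by case: (U \subset S); case: (perm_last pi U i); rewrite /= ?mulr1 ?mulr0.
Qed.

Lemma shapley_moebius S i : i \in S ->
  shapley S i = \sum_(U : {set 'I_N} | (U \subset S) && (i \in U)) moebius v U / #|U|%:R.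
Proof.
move=> iS; rewrite /shapley (eq_bigr _ (fun pi _ => marginal_moebius pi iS)).
rewrite exchange_big mulr_sumr; apply: eq_bigr => U /andP[_ iU].
rewrite -mulr_sumr sum_perm_lastE // mulrCA mulKf //.
by rewrite pnatr_eq0 -lt0n fact_gt0.
Qed.

(* Hart--Mas-Colell potential; the term [U = set0] vanishes since [x / 0 = 0]. *)
Definition potential S := \sum_(U : {set 'I_N} | U \subset S) moebius v U / #|U|%:R.

Lemma potential0 : potential set0 = 0.
Proof.
by rewrite /potential (big_pred1 set0) ?cards0 ?invr0 ?mulr0 // => U; rewrite /= subset0.
Qed.

Lemma potential_setD1 S i :
  potential S = potential (S :\ i) + (if i \in S then shapley S i else 0).
Proof.
rewrite /potential (sum_subsets_setD1 _ S i).
case: ifP => iS; first by rewrite shapley_moebius.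
by rewrite [X in _ + X]big1 // => U /andP[/subsetP/(_ i) US iU]; move: iS; rewrite US.
Qed.

Lemma potential_rec S : v set0 = 0 ->
  #|S|%:R * potential S = v S + \sum_(j in S) potential (S :\ j).
Proof.
move=> v0; rewrite /potential -[v S]sum_moebius mulr_sumr.
under [X in _ + X]eq_bigr => j _ do rewrite (eq_bigl _ _ (fun U => subsetD1 U S j)).
rewrite [X in _ + X](exchange_big_dep (fun U => U \subset S)) /=; last first.
  by move=> j U _ /andP[].
rewrite -big_split /=; apply: eq_bigr => U US.
rewrite (eq_bigl (mem (S :\: U))) => [|j]; last by rewrite !inE US andbC.
rewrite sumr_const cardsD (setIidPr US).
have [->|U0] := eqVneq U set0; first by rewrite moebius0 v0 !mul0r mul0rn addr0 mulr0.
have U0' : (#|U|%:R : R) != 0 by rewrite pnatr_eq0 cards_eq0.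
rewrite -[X in _ + X]mulr_natr natrB ?subset_leq_card //.
by field.
Qed.

End ShapleyValue.

Section HarmonicNumber.
Variable R : realType.

Lemma harmonic_numberS n : harmonic_number R n.+1 = harmonic_number R n + n.+1%:R^-1.
Proof. by rewrite /harmonic_number big_nat_recr. Qed.

Lemma harmonic_number_ge0 n : 0 <= harmonic_number R n.
Proof. by apply: sumr_ge0 => k _; rewrite invr_ge0 ler0n. Qed.

Lemma le_harmonic_number : {homo harmonic_number R : m n / (m <= n)%N >-> m <= n}.
Proof.
move=> m n mn; rewrite /harmonic_number [X in _ <= X](big_cat_nat (n := m.+1)) //= ?ltnS //.
by rewrite lerDl sumr_ge0 // => k _; rewrite invr_ge0 ler0n.
Qed.

End HarmonicNumber.

Section PotentialBounds.
Variables (R : realType) (N : nat) (v : {set 'I_N} -> R).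
Hypothesis v0 : v set0 = 0.

Lemma potential_le_harmonic S : (forall T, 0 <= v T) ->
    {homo v : T U / T \subset U >-> T <= U} ->
  potential v S <= harmonic_number R #|S| * v S.
Proof.
move=> v_ge0 v_mono; move cS : #|S| => n; elim: n S cS => [|n IH] S cS.
  by move/eqP: cS; rewrite cards_eq0 => /eqP ->; rewrite potential0 v0 mulr0.
rewrite -(ler_pM2l (ltr0Sn R n)) -cS potential_rec // cS harmonic_numberS.
have IH_j j : j \in S -> potential v (S :\ j) <= harmonic_number R n * v S.
  move=> jS; have cSj : #|S :\ j| = n by move: cS; rewrite (cardsD1 j) jS => -[].
  apply: le_trans (IH _ cSj) _; rewrite ler_wpM2l ?harmonic_number_ge0 //.
  exact/v_mono/subD1set.
apply: le_trans (lerD (lexx _) (ler_sum _ IH_j)) _.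
rewrite sumr_const cS -mulr_natr le_eqVlt; apply/orP; left; apply/eqP.
by field; rewrite addrC natr1 pnatr_eq0.
Qed.

Lemma le_potential (m : R) S : 0 < m ->
    (forall T, T != set0 -> (#|T|%:R - m) * v T <= \sum_(j in T) v (T :\ j)) ->
  v S <= m * potential v S.
Proof.
move=> m_gt0 v_rec; move cS : #|S| => n; elim: n S cS => [|n IH] S cS.
  by move/eqP: cS; rewrite cards_eq0 => /eqP ->; rewrite potential0 v0 mulr0.
rewrite -(ler_pM2l (ltr0Sn R n)) mulrCA -cS potential_rec // mulrDr.
have : \sum_(j in S) v (S :\ j) <= m * \sum_(j in S) potential v (S :\ j).
  rewrite mulr_sumr; apply: ler_sum => j jS.
  by apply: IH; move: cS; rewrite (cardsD1 j) jS => -[].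
have := v_rec S; rewrite -card_gt0 cS => /(_ isT).
lra.
Qed.

End PotentialBounds.

Lemma bernoulli_ineq (R : realDomainType) (x : R) n :
  -1 <= x -> 1 + n%:R * x <= (1 + x) ^+ n.
Proof.
move=> x_ge; elim: n => [|n IH]; first by rewrite mul0r addr0 expr0.
have x1 : 0 <= 1 + x by lra.
rewrite exprSr; apply: le_trans (ler_wpM2r x1 IH).
have n0 : (0 : R) <= n%:R by rewrite ler0n.
rewrite -natr1; nra.
Qed.

Section PowerBounds.
Variable R : realType.

Lemma bernoulli_powR (a z : R) (M : nat) : 0 < a <= M%:R -> 0 <= z <= 1 ->
  1 - M%:R * z <= (1 - z) `^ a.
Proof.
move=> /andP[a_gt0 aM] /andP[z0 z1]; have [->|z_neq1] := eqVneq z 1.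
  rewrite subrr powR0 ?gt_eqF // mulr1 subr_le0 ler1n lt0n -(pnatr_eq0 R).
  by rewrite gt_eqF // (lt_le_trans a_gt0 aM).
have y01 : 0 < 1 - z <= 1.
  by rewrite subr_gt0 lt_neqAle z_neq1 z1 lerBlDr lerDl z0.
apply: le_trans (ger_powR y01 aM); rewrite powR_mulrn ?subr_ge0 //.
by have := bernoulli_ineq M (_ : -1 <= - z); rewrite mulrN; apply; rewrite lerN2.
Qed.

Lemma leave_one_out_powR (I : finType) (A : {pred I}) (u : I -> R) (a : R) (M : nat) :
    0 < a <= M%:R -> (forall k, 0 <= u k) -> 0 < \sum_(k in A) u k ->
  (#|A|%:R - M%:R) * (\sum_(k in A) u k) `^ a
    <= \sum_(k in A) (\sum_(k in A) u k - u k) `^ a.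
Proof.
move=> aM u_ge0; set L := \sum_(k in A) u k => L_gt0.
have uL k : k \in A -> 0 <= u k / L <= 1.
  move=> kA; apply/andP; split; first by rewrite divr_ge0 ?u_ge0 ?ltW.
  rewrite ler_pdivrMr // mul1r /L (bigD1 k) //=.
  by rewrite lerDl sumr_ge0.
have step k : k \in A -> L `^ a * (1 - M%:R * (u k / L)) <= (L - u k) `^ a.
  move=> kA; have /andP[_ uL1] := uL k kA.
  have -> : L - u k = L * (1 - u k / L) by field; rewrite gt_eqF.
  rewrite powRM ?subr_ge0 ?(ltW L_gt0) //.
  by apply: ler_wpM2l; [exact: powR_ge0 | exact: bernoulli_powR aM (uL k kA)].
apply: le_trans (ler_sum _ step); rewrite -mulr_sumr sumrB sumr_const -mulr_sumr.
by rewrite -mulr_suml mulfV ?gt_eqF // mulr1 mulrC.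
Qed.

End PowerBounds.

Section ResourceGame.
Variables (R : realType) (E : finType) (N q : nat) (alpha : 'I_q -> R)
  (sigma : E -> R) (xi : E -> 'I_q -> R) (w : 'I_N -> E -> nat).
Hypotheses (w_ge1 : forall i e, (1 <= w i e)%N) (alpha_gt1 : forall j, 1 < alpha j)
  (sigma_ge0 : forall e, 0 <= sigma e) (xi_ge0 : forall e j, 0 <= xi e j).
Implicit Types (T U : {set 'I_N}).

Local Notation F := (Fcost alpha sigma xi).

Definition set_load e T := (\sum_(k in T) w k e)%N.

Definition resource_game e T := F e (set_load e T).

Lemma set_loadD1 e T k : k \in T -> set_load e T = (w k e + set_load e (T :\ k))%N.
Proof. exact: big_setD1. Qed.

Lemma set_load_eq0 e T : (set_load e T == 0)%N = (T == set0).
Proof.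
have [->|[k kT]] := set_0Vmem T; first by rewrite /set_load big_set0 !eqxx.
have := w_ge1 k e; rewrite (set_loadD1 e kT) addn_eq0 lt0n => /negbTE ->.
by apply/esym/negbTE/set0Pn; exists k.
Qed.

Lemma Fcost_ge0 e l : 0 <= F e l.
Proof.
rewrite /Fcost; case: eqP => // _; rewrite addr_ge0 ?sumr_ge0 // => j _.
by rewrite mulr_ge0 ?powR_ge0.
Qed.

Lemma le_Fcost e l l' : (l <= l')%N -> F e l <= F e l'.
Proof.
move=> ll'; have [->|l0] := eqVneq l 0%N; first by rewrite {1}/Fcost eqxx Fcost_ge0.
have l'0 : (l' == 0)%N = false by apply/negbTE; rewrite -lt0n (leq_trans _ ll') ?lt0n.
rewrite /Fcost (negbTE l0) l'0 lerD2l.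
apply: ler_sum => j _; rewrite ler_wpM2l // ge0_ler_powR ?nnegrE ?ler0n ?ler_nat //.
exact: ltW (lt_trans ltr01 (alpha_gt1 j)).
Qed.

Lemma resource_gameE e T : resource_game e T =
  (T != set0)%:R * sigma e + \sum_(j < q) xi e j * (set_load e T)%:R `^ alpha j.
Proof.
rewrite /resource_game /Fcost set_load_eq0; have [->|_] := eqVneq T set0; last first.
  by rewrite mul1r.
rewrite mul0r add0r /set_load big_set0 big1 // => j _.
by rewrite powR0 ?mulr0 // gt_eqF // (lt_trans ltr01).
Qed.

Lemma resource_game0 e : resource_game e set0 = 0.
Proof. by rewrite /resource_game /Fcost /set_load big_set0. Qed.

Lemma resource_game_ge0 e T : 0 <= resource_game e T.
Proof. exact: Fcost_ge0. Qed.

Lemma resource_game_mono e : {homo resource_game e : T U / T \subset U >-> T <= U}.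
Proof.
move=> T U TU; apply: le_Fcost; rewrite /set_load [X in (_ <= X)%N](big_setID T) /=.
by rewrite (setIidPr TU) leq_addr.
Qed.

Lemma sum_resource_game_setD1 (M : nat) e T : (1 <= M)%N ->
    (forall j, alpha j <= M%:R) -> T != set0 ->
  (#|T|%:R - M%:R) * resource_game e T <= \sum_(k in T) resource_game e (T :\ k).
Proof.
move=> M1 alphaM T0; rewrite resource_gameE T0 mul1r.
under [X in _ <= X]eq_bigr do rewrite resource_gameE.
rewrite big_split mulrDr /=; apply: lerD.
  have [T1|T2] := leqP #|T| 1.
    rewrite (@le_trans _ _ 0) ?sumr_ge0 // => [|k _]; last by rewrite mulr_ge0 ?ler0n.
    by rewrite mulr_le0_ge0 // subr_le0 ler_nat (leq_trans T1 M1).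
  rewrite (eq_bigr (fun=> sigma e)) => [|k kT]; last first.
    by move: T2; rewrite (cardsD1 k) kT ltnS card_gt0 => ->; rewrite mul1r.
  rewrite sumr_const -[X in _ <= X]mulr_natr mulrC; apply: ler_wpM2l => //.
  by rewrite lerBlDr lerDl ler0n.
rewrite mulr_sumr exchange_big /=; apply: ler_sum => j _.
rewrite -mulr_sumr mulrCA ler_wpM2l //.
have L_gt0 : 0 < \sum_(k in T) (w k e)%:R :> R.
  by rewrite -natr_sum ltr0n lt0n set_load_eq0.
have := leave_one_out_powR _ (fun k => ler0n R (w k e)) L_gt0.
rewrite -natr_sum => /(_ (alpha j) M); rewrite (lt_trans ltr01) ?alphaM //= => /(_ isT).
congr (_ <= _); apply: eq_bigr => k kT.
by rewrite -/(set_load e T) (set_loadD1 e kT) natrD addrAC subrr add0r.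
Qed.

End ResourceGame.

Section ShapleyCostSharing.
Variables (R : realType) (E : finType) (N q : nat) (alpha : 'I_q -> R)
  (sigma : E -> R) (xi : E -> 'I_q -> R) (w : 'I_N -> E -> nat).
Implicit Types (p : profile E N).

Local Notation game := (resource_game alpha sigma xi w).
Local Notation C := (total_cost alpha sigma xi w).
Local Notation Ci := (indiv_cost alpha sigma xi w).

Definition users p e := [set k | e \in p k].

Lemma users_upd_setD1 p i r e : users (upd p i r) e :\ i = users p e :\ i.
Proof. by apply/setP => k; rewrite !inE /upd; case: eqP. Qed.

Lemma total_costE p : C p = \sum_e game e (users p e).
Proof.
apply: eq_bigr => e _; congr Fcost.
by apply: eq_bigl => k; rewrite inE.
Qed.

Lemma shapley_shareE p i e : shapley_share alpha sigma xi w i e p =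
  if i \in users p e then shapley (game e) (users p e) i else 0.
Proof.
rewrite /shapley_share inE; case: ifP => // _; congr (_ * _).
apply: eq_bigr => pi _; have iP : i \notin predecessors pi (users p e) i.
  by rewrite inE ltnn andbF.
rewrite /resource_game /set_load big_setU1 //= addnC.
suff -> : (\sum_(k in predecessors pi (users p e) i) w k e)%N
        = (\sum_(k < N | (e \in p k) && (pi k < pi i)%N) w k e)%N by [].
by apply: eq_bigl => k; rewrite !inE.
Qed.

Definition shapley_potential p := \sum_e potential (game e) (users p e).

Lemma shapley_potential_indiv p i :
  shapley_potential p = \sum_e potential (game e) (users p e :\ i) + Ci i p.
Proof.
rewrite /indiv_cost -big_split; apply: eq_bigr => e _.
by rewrite {1}(potential_setD1 _ _ i) shapley_shareE.
Qed.

Lemma shapley_potential_upd p i r :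
  shapley_potential (upd p i r) - Ci i (upd p i r) = shapley_potential p - Ci i p.
Proof.
rewrite !(shapley_potential_indiv _ i) !addrK.
by apply: eq_bigr => e _; rewrite users_upd_setD1.
Qed.

Hypotheses (w_ge1 : forall i e, (1 <= w i e)%N) (alpha_gt1 : forall j, 1 < alpha j)
  (sigma_ge0 : forall e, 0 <= sigma e) (xi_ge0 : forall e j, 0 <= xi e j).

Lemma shapley_potential_le_harmonic p :
  shapley_potential p <= harmonic_number R N * C p.
Proof.
rewrite total_costE mulr_sumr; apply: ler_sum => e _.
apply: le_trans (potential_le_harmonic _ _ _ _) _.
- exact: resource_game0.
- exact: resource_game_ge0.
- exact: resource_game_mono.
apply: ler_wpM2r; first exact: resource_game_ge0.
by apply: le_harmonic_number; have := max_card (mem (users p e)); rewrite card_ord.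
Qed.

Lemma total_cost_le_potential (M : nat) p : (1 <= M)%N -> (forall j, alpha j <= M%:R) ->
  C p <= M%:R * shapley_potential p.
Proof.
move=> M_ge1 alphaM; rewrite total_costE mulr_sumr; apply: ler_sum => e _.
apply: le_potential; first exact: resource_game0.
  by rewrite ltr0n.
by move=> T T0; apply: sum_resource_game_setD1.
Qed.

End ShapleyCostSharing.

Lemma approx_improvement (R : realFieldType) (eps c c' a a' : R) : 0 < eps < 1 ->
    a <= (1 + eps) * c -> (1 - eps) * c' <= a' ->
  0 < a - (1 + eps) / (1 - eps) * a' -> c' < c.
Proof.
move=> /andP[eps_gt0 eps_lt1] ac ac' improving.
have eps1 : 0 < 1 - eps by rewrite subr_gt0.
have epsS : 0 < 1 + eps by rewrite addr_gt0.
rewrite -(ltr_pM2l epsS) -[X in X * c'](divfK (lt0r_neq0 eps1)).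
rewrite -(mulrA ((1 + eps) / (1 - eps))).
apply: le_lt_trans (ler_wpM2l _ ac') _; first by rewrite divr_ge0 ?ltW.
by apply: lt_le_trans ac; rewrite -subr_gt0.
Qed.

Section ABRDRun.
Variables (R : realType) (E : finType) (N q : nat) (alpha : 'I_q -> R)
  (sigma : E -> R) (xi : E -> 'I_q -> R) (w : 'I_N -> E -> nat)
  (P : 'I_N -> {set {set E}}) (rho eps : R) (ftil : 'I_N -> E -> profile E N -> R)
  (deterministic : bool) (T : nat) (p : nat -> profile E N) (br : nat -> 'I_N -> {set E}).
Hypotheses (eps01 : 0 < eps < 1)
  (ftil_approx : forall (pp : profile E N) i e, (forall k, pp k \in P k) ->
     (1 - eps) * shapley_share alpha sigma xi w i e pp <= ftil i e pp /\
     ftil i e pp <= (1 + eps) * shapley_share alpha sigma xi w i e pp)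
  (run : is_ABRD_run deterministic rho eps alpha sigma xi w P ftil T p br).

Local Notation Phi := (shapley_potential alpha sigma xi w).

Lemma shapley_potential_improve (pp : profile E N) j r :
    (forall k, pp k \in P k) -> r \in P j ->
    0 < approx_cost ftil j pp - (1 + eps) / (1 - eps) * approx_cost ftil j (upd pp j r) ->
  Phi (upd pp j r) <= Phi pp.
Proof.
move=> pp_in r_in improving.
have upd_in k : upd pp j r k \in P k by rewrite /upd; case: eqP => [->|].
suff : indiv_cost alpha sigma xi w j (upd pp j r) < indiv_cost alpha sigma xi w j pp.
  by have := shapley_potential_upd alpha sigma xi w pp j r; lra.
apply: approx_improvement eps01 _ _ improving; rewrite /indiv_cost mulr_sumr.
  by apply: ler_sum => e _; case: (ftil_approx j e pp_in).
by apply: ler_sum => e _; case: (ftil_approx j e upd_in).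
Qed.

Lemma ABRD_run_step t : (1 <= t <= T)%N ->
  p t = p t.-1 \/ exists2 j, 0 < delta eps ftil p br t j & p t = upd (p t.-1) j (br t j).
Proof.
move=> tT; have [_ /(_ t tT) [_]] := run.
case: deterministic => [[j [dj [_ ->]]]|[j ->]]; first by right; exists j.
by case: ifP => dj; [right; exists j | left].
Qed.

Lemma ABRD_run_feasible t : (t <= T)%N -> forall k, p t k \in P k.
Proof.
have [init step] := run; elim: t => [_ k|t IH tT k]; first by case: (init k).
have [br_in _] := step t.+1 tT.
have [->|[j _ ->]] := ABRD_run_step (t := t.+1) tT; first exact: (IH (ltnW tT) k).
rewrite /upd; case: ifP => [/eqP ->|_]; [by case: (br_in j) | exact: (IH (ltnW tT) k)].
Qed.

Lemma ABRD_run_potential_step t : (t < T)%N -> Phi (p t.+1) <= Phi (p t).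
Proof.
move=> tT; have [->//|[j improving ->]] := ABRD_run_step (t := t.+1) tT.
have [br_in _] := run.2 t.+1 tT.
apply: shapley_potential_improve improving; last by case: (br_in j).
exact: ABRD_run_feasible (ltnW tT).
Qed.

Lemma ABRD_run_potential_nonincreasing s t : (s <= t <= T)%N -> Phi (p t) <= Phi (p s).
Proof.
elim: t => [|t IH] /andP[st tT]; first by move: st; rewrite leqn0 => /eqP ->.
move: st; rewrite leq_eqVlt ltnS => /predU1P[-> //|st].
by apply: le_trans (ABRD_run_potential_step tT) (IH _); rewrite st ltnW.
Qed.

End ABRDRun.

Lemma ceil_bigmax_nat (R : archiRealDomainType) q (a : 'I_q -> R) :
    (0 < q)%N -> (forall j, 0 < a j) ->
  exists M : nat, [/\ (Num.ceil (\big[Num.max/0]_(j < q) a j))%:~R = M%:R :> R,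
                      (1 <= M)%N & forall j, a j <= M%:R].
Proof.
move=> q_gt0 a_gt0; set m := \big[Num.max/0]_(j < q) a j.
have a_le j : a j <= m by apply: le_bigmax.
have m_gt0 : 0 < m := lt_le_trans (a_gt0 (Ordinal q_gt0)) (a_le _).
have c_gt0 : 0 < Num.ceil m by rewrite ceil_gt0.
exists `|Num.ceil m|%N; rewrite natr_absz gtr0_norm //; split => //.
  by rewrite absz_gt0 gt_eqF.
by move=> j; rewrite (le_trans (a_le j)) ?ceil_ge.
Qed.

Unset Implicit Arguments. Set Strict Implicit.

Theorem theorem9p4 (R : realType) (E : finType) (N q : nat)
  (w : 'I_N -> E -> nat) (P : 'I_N -> {set {set E}})
  (alpha : 'I_q -> R) (sigma : E -> R) (xi : E -> 'I_q -> R)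
  (rho eps : R) (ftil : 'I_N -> E -> profile E N -> R)
  (deterministic : bool) (T : nat)
  (p : nat -> profile E N) (br : nat -> 'I_N -> {set E}) :
  (forall i e, (1 <= w i e)%N) ->
  (0 < q)%N ->
  (forall j, 1 < alpha j) ->
  (forall e, 0 <= sigma e) ->
  (forall e j, 0 <= xi e j) ->
  (forall e, 0 < sigma e \/ exists j, 0 < xi e j) ->
  1 <= rho ->
  0 < eps < 1 ->
  (forall (pp : profile E N) i e, (forall k, pp k \in P k) ->
     (1 - eps) * shapley_share alpha sigma xi w i e pp <= ftil i e pp /\
     ftil i e pp <= (1 + eps) * shapley_share alpha sigma xi w i e pp) ->
  is_ABRD_run deterministic rho eps alpha sigma xi w P ftil T p br ->
  (* the dynamic does not converge at any step *)
  (forall t, (1 <= t <= T)%N -> exists i, 0 < delta eps ftil p br t i) ->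
  forall tstar, (tstar <= T)%N ->
  (forall t, (t <= T)%N ->
     total_cost alpha sigma xi w (p tstar) <= total_cost alpha sigma xi w (p t)) ->
  total_cost alpha sigma xi w (p T)
  <= (Num.ceil (\big[Num.max/0]_(j < q) alpha j))%:~R * @harmonic_number R N
     * total_cost alpha sigma xi w (p tstar).
Proof.
(* Only [tstar <= T] matters: the potential never increases along the run. *)
move=> w_ge1 q_gt0 alpha_gt1 sigma_ge0 xi_ge0 _ _ eps01 ftil_approx run _ tstar tstarT _.
have [M [-> M_ge1 alphaM]] := ceil_bigmax_nat q_gt0 (fun j => lt_trans ltr01 (alpha_gt1 j)).
apply: le_trans
  (total_cost_le_potential w_ge1 alpha_gt1 sigma_ge0 xi_ge0 _ M_ge1 alphaM) _.
rewrite -mulrA; apply: ler_wpM2l; first exact: ler0n.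
apply: le_trans _ (shapley_potential_le_harmonic w alpha_gt1 sigma_ge0 xi_ge0 _).
by apply: (ABRD_run_potential_nonincreasing eps01 ftil_approx run); rewrite tstarT leqnn.
Qed.
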